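(* Let $\mathcal{T}$ be a finite or countably infinite set, let $\prec$ be a strict total order on $\mathcal{T}$, and let $\mathbf{p} \ne \mathbf{q}$ be two probability distributions on $\mathcal{T}$. For each positive integer $m$, let $X_0 \sim \mathbf{q}$, $X_1,\dots,X_m \sim^{\mathrm{iid}} \mathbf{p}$, $U_0,\dots,U_m \sim^{\mathrm{iid}} \mathrm{Uniform}(0,1)$ be mutually independent, and let $R_m = \sum_{j=1}^m \big(\mathbb{I}[X_j \prec X_0] + \mathbb{I}[X_j = X_0, U_j < U_0]\big)$. Let $M \ge 1$ be such that $R_M$ is not uniformly distributed on $\{0,1,\dots,M\}$. Then for all $m \ge M$, $R_m$ is not uniformly distributed on $\{0,1,\dots,m\}$.
   Context: $\mathbb{I}[\cdot]$ denotes the indicator of an event. (Such an $M$ exists whenever $\mathbf{p}\neq\mathbf{q}$.) *)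

From HB Require Import structures.
From mathcomp Require Import all_boot all_order all_algebra.
From mathcomp Require Import all_classical all_reals all_analysis.
Set Implicit Arguments. Unset Strict Implicit. Unset Printing Implicit Defensive.
Import Order.TTheory GRing.Theory Num.Theory.
Local Open Scope classical_set_scope.
Local Open Scope ring_scope.

Definition strict_total_order (T : eqType) (lt : rel T) : Prop :=
  [/\ (forall x, ~~ lt x x),
      (forall x y z, lt x y -> lt y z -> lt x z) &
      (forall x y, x != y -> lt x y \/ lt y x)].

(* Mutual independence of the whole family (X_i)_{i : nat}, (U_i)_{i : nat}:
   product rule for every finite initial block of indices 0..n, with arbitrary
   events {X_i \in A_i} (T carries the discrete sigma-algebra) and measurable
   events {U_i \in B_i}.  Taking A_i = setT / B_i = setT yields every finite
   subfamily, so this is exactly mutual independence. *)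
Definition mutually_independent (d : measure_display) (Omega : measurableType d)
  (R : realType) (P : probability Omega R) (T : Type)
  (X : nat -> Omega -> T) (U : nat -> Omega -> R) : Prop :=
  forall (n : nat) (A : nat -> set T) (B : nat -> set R),
    (forall i, measurable (B i)) ->
    P (\bigcap_(i in `I_n.+1) ((X i @^-1` A i) `&` (U i @^-1` B i))) =
    (\prod_(i < n.+1) (P (X i @^-1` A i) * P (U i @^-1` B i)))%E.

Definition rank_stat (R : realType) (T : eqType) (Omega : Type) (lt : rel T)
  (X : nat -> Omega -> T) (U : nat -> Omega -> R) (m : nat) (w : Omega) : nat :=
  (\sum_(1 <= j < m.+1)
     (lt (X j w) (X 0%N w) + ((X j w == X 0%N w) && (U j w < U 0%N w))%R))%N.

Definition uniform_on_0m (d : measure_display) (Omega : measurableType d)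
  (R : realType) (P : probability Omega R) (Y : Omega -> nat) (m : nat) : Prop :=
  forall k : nat, (k <= m)%N -> P (Y @^-1` [set k]) = ((m.+1%:R)^-1)%:E.

From HB Require Import structures.
From mathcomp Require Import all_boot all_order all_algebra.
From mathcomp Require Import all_classical all_reals all_analysis.
From mathcomp Require Import measurable_realfun zify ring.
Import Order.TTheory GRing.Theory Num.Theory.
Local Open Scope classical_set_scope.
Local Open Scope ring_scope.

(* If R_m is uniform on {0, ..., m}, then so is R_(m-1); iterating from m down
   to M contradicts the hypothesis on R_M.  Write R_m = I_1 + ... + I_m, where
   I_j indicates that observation j ranks below observation 0.  Conditionally
   on X_0 and U_0, the pairs (X_j, U_j), 1 <= j <= m, are exchangeable, so
   P(R_m = k, I_j) does not depend on j and summing over j gives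
   m P(R_m = k, I_m) = k P(R_m = k).  Since R_(m-1) = R_m - I_m,
     P(R_(m-1) = k) = P(R_m = k) - P(R_m = k, I_m) + P(R_m = k+1, I_m),
   which equals 1/(m+1) + 1/(m (m+1)) = 1/m under uniformity.
   Exchangeability is obtained on the trajectory space (T * R)^nat: the laws of
   the trajectory and of its image under a transposition of coordinates agree
   on cylinder sets by independence, hence everywhere by uniqueness of
   measures. *)

Lemma big_nat_involutive {V : Type} {idx : V} (op : Monoid.com_law idx)
    {a b : nat} {s : nat -> nat} (F : nat -> V) :
  (forall i, (a <= i < b)%N -> (a <= s i < b)%N) ->
  (forall i, (a <= i < b)%N -> s (s i) = i) ->
  \big[op/idx]_(a <= i < b) F (s i) = \big[op/idx]_(a <= i < b) F i.
Proof.
move=> s_in sK; rewrite -(big_map s xpredT F); apply/perm_big/uniq_perm.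
- rewrite map_inj_in_uniq ?iota_uniq // => x y.
  by rewrite !mem_index_iota => /sK {2}<- /sK {2}<- ->.
- exact: iota_uniq.
- move=> x; apply/mapP/idP => [[y]|]; rewrite mem_index_iota.
    by move=> /s_in; rewrite -mem_index_iota => + ->.
  by move=> x_in; exists (s x); rewrite ?mem_index_iota ?sK ?s_in.
Qed.

Definition tperm_nat (j k i : nat) : nat :=
  if i == j then k else if i == k then j else i.

Lemma tperm_natK j k : involutive (tperm_nat j k).
Proof.
by move=> i; rewrite /tperm_nat; repeat case: ifP => /eqP; congruence.
Qed.

Lemma tperm_natL j k : tperm_nat j k j = k.
Proof. by rewrite /tperm_nat eqxx. Qed.

Lemma tperm_nat_id j k i : i != j -> i != k -> tperm_nat j k i = i.
Proof. by rewrite /tperm_nat => /negbTE -> /negbTE ->. Qed.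

Lemma tperm_nat_in a b j k i : (a <= j < b)%N -> (a <= k < b)%N ->
  (a <= i < b)%N -> (a <= tperm_nat j k i < b)%N.
Proof. by rewrite /tperm_nat; case: eqP => // _; case: eqP. Qed.

Section countable_valued.
Variables (d : measure_display) (Omega : measurableType d).
Variables (R : realType) (P : probability Omega R) (T : countType).
Implicit Types (f g : Omega -> T) (A : set T).

Lemma pickle_fiber_cases A n :
  [set t | A t /\ pickle t = n] = set0 \/
  exists t, [set t | A t /\ pickle t = n] = [set t].
Proof.
have [[t [At tn]]|none] := pselect (exists t, A t /\ pickle t = n); last first.
  by left; apply/seteqP; split => // t At; apply: none; exists t.
right; exists t; apply/seteqP; split => [s [_]|s ->] //=.
by rewrite -tn => /(pcan_inj (@pickleK T)).
Qed.

Lemma preimage_pickle_bigcup f A :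
  f @^-1` A = \bigcup_n f @^-1` [set t | A t /\ pickle t = n].
Proof.
by apply/seteqP; split => [w Afw|w [n _ []]] //; exists (pickle (f w)).
Qed.

Lemma measurable_preimage_countable f A :
  (forall t, measurable (f @^-1` [set t])) -> measurable (f @^-1` A).
Proof.
move=> mf; rewrite preimage_pickle_bigcup; apply: bigcupT_measurable => n.
by case: (pickle_fiber_cases A n) => [->|[t ->]]; rewrite ?preimage_set0.
Qed.

Lemma probability_preimage_countable f g A :
  (forall t, measurable (f @^-1` [set t])) ->
  (forall t, measurable (g @^-1` [set t])) ->
  (forall t, P (f @^-1` [set t]) = P (g @^-1` [set t])) ->
  P (f @^-1` A) = P (g @^-1` A).
Proof.
move=> mf mg fg; rewrite !preimage_pickle_bigcup.
have fibers_disjoint h :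
    trivIset setT (fun n => h @^-1` [set t | A t /\ pickle t = n]).
  by move=> i j _ _ [w [[_ <-] [_ <-]]].
rewrite !measure_bigcup //= => [|n _|n _];
  try exact: measurable_preimage_countable.
apply: eq_eseriesr => n _.
by case: (pickle_fiber_cases A n) => [->|[t ->]]; rewrite ?preimage_set0.
Qed.

End countable_valued.

Section nat_level_sets.
Variables (d : measure_display) (V : measurableType d).
Implicit Types (f g : V -> nat).

Lemma measurable_level_bool (b : V -> bool) k :
  measurable [set z | b z] -> measurable ((fun z => b z : nat) @^-1` [set k]).
Proof.
move=> mb; case: k => [|[|k]].
- rewrite (_ : _ @^-1` _ = ~` [set z | b z]); first exact: measurableC.
  by apply/seteqP; split => z /=; case: (b z).
- rewrite (_ : _ @^-1` _ = [set z | b z]) //.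
  by apply/seteqP; split => z /=; case: (b z).
- rewrite (_ : _ @^-1` _ = set0) //.
  by apply/seteqP; split => z /=; case: (b z).
Qed.

Lemma measurable_level_addn f g k :
  (forall i, measurable (f @^-1` [set i])) ->
  (forall i, measurable (g @^-1` [set i])) ->
  measurable ((fun z => f z + g z)%N @^-1` [set k]).
Proof.
move=> mf mg.
rewrite (_ : _ @^-1` _ =
    \bigcup_(i in `I_k.+1) (f @^-1` [set i] `&` g @^-1` [set (k - i)%N])).
  by apply: bigcup_measurable => i _; apply: measurableI.
apply/seteqP; split => z /= => [<-|[i /= ik [fi ->]]]; last first.
  by rewrite -fi subnKC // fi -ltnS.
exists (f z); last by rewrite /= addKn.
by rewrite /= ltnS leq_addr.
Qed.

Lemma measurable_level_sum (I : eqType) (r : seq I) (F : I -> V -> nat) k :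
  (forall i j, i \in r -> measurable (F i @^-1` [set j])) ->
  measurable ((fun z => \sum_(i <- r) F i z)%N @^-1` [set k]).
Proof.
elim: r k => [|i r IH] k mF.
  under eq_fun do rewrite big_nil.
  by rewrite (preimage_cst 0%N); case: ifP.
under eq_fun do rewrite big_cons.
apply: measurable_level_addn => [j|j]; first by apply: mF; rewrite mem_head.
by apply: IH => i0 l ir; apply: mF; rewrite in_cons ir orbT.
Qed.

End nat_level_sets.

Section rank_statistic.
Variables (R : realType) (T : countType) (lt : rel T).
Variables (d : measure_display) (Omega : measurableType d).
Variables (X : nat -> Omega -> T) (U : nat -> Omega -> R).

Definition traj := nat -> T * R.

(* The generated sigma-algebra below lives on a pointed type; [T] is
   inhabited through [X 0], since [Omega] is. *)
HB.instance Definition _ := Choice.on traj.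
HB.instance Definition _ := isPointed.Build traj (fun=> (X 0%N point, 0)).

Definition sample_path (w : Omega) : traj := fun i => (X i w, U i w).

Definition rank_term (j : nat) (z : traj) : nat :=
  (lt (z j).1 (z 0%N).1 +
   (((z j).1 == (z 0%N).1) && ((z j).2 < (z 0%N).2)%R))%N.

Definition traj_rank (n : nat) (z : traj) : nat :=
  (\sum_(1 <= j < n.+1) rank_term j z)%N.

Lemma rank_statE n w : rank_stat lt X U n w = traj_rank n (sample_path w).
Proof. by []. Qed.

Lemma traj_rankS n z : traj_rank n.+1 z = (traj_rank n z + rank_term n.+1 z)%N.
Proof. by rewrite /traj_rank big_nat_recr. Qed.

Lemma rank_term_comp (s : nat -> nat) j z :
  s 0%N = 0%N -> rank_term j (z \o s) = rank_term (s j) z.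
Proof. by rewrite /rank_term /= => ->. Qed.

Lemma traj_rank_comp (s : nat -> nat) n z :
  s 0%N = 0%N ->
  (forall i, (1 <= i < n.+1)%N -> (1 <= s i < n.+1)%N) ->
  (forall i, (1 <= i < n.+1)%N -> s (s i) = i) ->
  traj_rank n (z \o s) = traj_rank n z.
Proof.
move=> s0 s_in sK; rewrite /traj_rank.
under eq_bigr do rewrite rank_term_comp //.
exact: big_nat_involutive.
Qed.

Section cylinders.
Variable m : nat.

Definition cylinder (A : nat -> set T) (B : nat -> set R) : set traj :=
  [set z | forall i, (i <= m)%N -> A i (z i).1 /\ B i (z i).2].

Definition cylinders : set (set traj) :=
  [set cylinder A B | A in setT & B in [set B | forall i, measurable (B i)]].

Local Notation trajs := (g_sigma_algebraType cylinders).

Lemma cylinders_setT : cylinders setT.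
Proof.
exists (fun=> setT) => //; exists (fun=> setT) => //.
by apply/seteqP; split.
Qed.

Lemma cylinders_setI : setI_closed cylinders.
Proof.
move=> _ _ [A _ [B mB <-]] [A' _ [B' mB' <-]].
exists (fun i => A i `&` A' i) => //.
exists (fun i => B i `&` B' i) => [i|]; first exact: measurableI.
apply/seteqP; split => z /=.
  by move=> zAB; split=> i /zAB [[? ?] [? ?]].
by move=> [zAB zAB'] i im; case: (zAB i im); case: (zAB' i im).
Qed.

Lemma measurable_fst (A : set T) i :
  (i <= m)%N -> measurable [set z : trajs | A (z i).1].
Proof.
move=> im; apply: sub_sigma_algebra.
exists (fun l => if l == i then A else setT) => //.
exists (fun=> setT) => //; apply/seteqP; split => z /=.
  by move=> zA; have [] := zA i im; rewrite eqxx.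
by move=> zA l lm; case: eqP => [->|].
Qed.

Lemma measurable_snd (B : set R) i :
  (i <= m)%N -> measurable B -> measurable [set z : trajs | B (z i).2].
Proof.
move=> im mB; apply: sub_sigma_algebra.
exists (fun=> setT) => //.
exists (fun l => if l == i then B else setT) => [l|]; first by case: eqP.
apply/seteqP; split => z /=.
  by move=> zB; have [] := zB i im; rewrite eqxx.
by move=> zB l lm; case: eqP => [->|].
Qed.

Lemma measurable_fst_rel (r : rel T) i k : (i <= m)%N -> (k <= m)%N ->
  measurable [set z : trajs | r (z i).1 (z k).1].
Proof.
move=> im km.
rewrite (_ : [set z | _] = \bigcup_t ([set z : trajs | (z k).1 = t] `&`
                                        [set z | r (z i).1 t])).
  apply: (countable_bigcupT_measurable (countableP _)) => t.
  apply: measurableI; first exact: (measurable_fst [set t] k km).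
  exact: (measurable_fst (r^~ t) i im).
by apply/seteqP; split => [z|z [t _ [/= <-]]] //; exists (z k).1.
Qed.

Lemma measurable_snd_lt i k : (i <= m)%N -> (k <= m)%N ->
  measurable [set z : trajs | (z i).2 < (z k).2].
Proof.
move=> im km.
rewrite (_ : [set z | _] = \bigcup_(q : rat)
    ([set z : trajs | [set` `]-oo, ratr q[] (z i).2] `&`
     [set z | [set` `]ratr q, +oo[] (z k).2])).
  apply: bigcupT_measurable_rat => q.
  by apply: measurableI; apply: measurable_snd => //; exact: measurable_itv.
apply/seteqP; split => z /=.
  move=> /rat_in_itvoo [q]; rewrite in_itv /= => /andP [zi zk].
  by exists q => //; rewrite /= !in_itv /= zi zk.
by move=> [q _ []]; rewrite /= !in_itv /= andbT; exact: lt_trans.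
Qed.

Lemma measurable_rank_term j k : (j <= m)%N ->
  measurable (rank_term j @^-1` [set k] : set trajs).
Proof.
move=> jm; rewrite /rank_term.
apply: measurable_level_addn => l; apply: measurable_level_bool.
  exact: measurable_fst_rel.
rewrite (_ : [set z | _] = [set z : trajs | (z j).1 == (z 0%N).1] `&`
                           [set z | (z j).2 < (z 0%N).2]).
  by apply: measurableI; [exact: measurable_fst_rel | exact: measurable_snd_lt].
by apply/seteqP; split => z /= => [/andP|[-> ->]].
Qed.

Lemma measurable_traj_rank n k : (n <= m)%N ->
  measurable (traj_rank n @^-1` [set k] : set trajs).
Proof.
move=> nm; apply: measurable_level_sum => j l; rewrite mem_index_iota.
by move=> /andP[_ jn]; apply: measurable_rank_term; exact: leq_trans nm.
Qed.

End cylinders.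

Hypothesis mX : forall i t, measurable (X i @^-1` [set t]).
Hypothesis mU : forall i, measurable_fun setT (U i).
Variable P : probability Omega R.
Hypothesis indep : mutually_independent P X U.

Section sample_path_law.
Variable m : nat.

Local Notation trajs := (g_sigma_algebraType (cylinders m)).

Lemma sample_path_cylinder A B : sample_path @^-1` cylinder m A B =
  \bigcap_(i in `I_m.+1) (X i @^-1` A i `&` U i @^-1` B i).
Proof. by apply/seteqP; split => w /= wAB i; apply: wAB. Qed.

Lemma measurable_sample_path_cylinder A B : (forall i, measurable (B i)) ->
  measurable (sample_path @^-1` cylinder m A B).
Proof.
move=> mB; rewrite sample_path_cylinder; apply: bigcap_measurable => [|i _].
  by exists 0%N.
apply: measurableI; first exact: measurable_preimage_countable.
by rewrite -[U i @^-1` _]setTI; apply: mU.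
Qed.

Lemma measurable_sample_path :
  measurable_fun setT (sample_path : Omega -> trajs).
Proof.
apply: (@measurability _ _ Omega trajs setT sample_path (cylinders m) erefl).
move=> _ [_ [A _ [B mB <-]] <-].
by rewrite setTI; exact: measurable_sample_path_cylinder.
Qed.

Lemma probability_cylinder A B : (forall i, measurable (B i)) ->
  P (sample_path @^-1` cylinder m A B) =
  (\prod_(0 <= i < m.+1) (P (X i @^-1` A i) * P (U i @^-1` B i)))%E.
Proof. by move=> mB; rewrite sample_path_cylinder big_mkord; exact: indep. Qed.

Section law_preserving_involution.
Variable s : nat -> nat.
Hypothesis s_le : forall i, (i <= m)%N -> (s i <= m)%N.
Hypothesis sK : forall i, (i <= m)%N -> s (s i) = i.
Hypothesis X_s : forall i t, (i <= m)%N ->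
  P (X (s i) @^-1` [set t]) = P (X i @^-1` [set t]).
Hypothesis U_s : forall i B, (i <= m)%N -> measurable B ->
  P (U (s i) @^-1` B) = P (U i @^-1` B).

Definition permuted_sample_path (w : Omega) : traj := sample_path w \o s.

Lemma permuted_sample_path_cylinder A B :
  permuted_sample_path @^-1` cylinder m A B =
  sample_path @^-1` cylinder m (A \o s) (B \o s).
Proof.
apply/seteqP; split => w /= wAB i im.
  by have := wAB (s i) (s_le _ im); rewrite /permuted_sample_path /= sK.
by have := wAB (s i) (s_le _ im); rewrite /permuted_sample_path /= sK.
Qed.

Lemma probability_permuted_cylinder A B : (forall i, measurable (B i)) ->
  P (permuted_sample_path @^-1` cylinder m A B) =
  P (sample_path @^-1` cylinder m A B).
Proof.
move=> mB; rewrite permuted_sample_path_cylinder.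
rewrite !probability_cylinder // => [|i]; last exact: mB.
have s_in i : (0 <= i < m.+1)%N -> (0 <= s i < m.+1)%N.
  by rewrite !ltnS; exact: s_le.
have sK' i : (0 <= i < m.+1)%N -> s (s i) = i by rewrite ltnS; exact: sK.
rewrite -[RHS](big_nat_involutive _ _ s_in sK').
apply: eq_big_nat => i /andP[_]; rewrite ltnS => im /=.
rewrite U_s //; congr (_ * _)%E.
by apply: probability_preimage_countable => // t; rewrite X_s.
Qed.

Lemma permuted_sample_path_law (S : set trajs) : measurable S ->
  P (permuted_sample_path @^-1` S) = P (sample_path @^-1` S).
Proof.
have mZs : measurable_fun setT (permuted_sample_path : Omega -> trajs).
  apply: (@measurability _ _ Omega trajs setT _ (cylinders m) erefl).
  move=> _ [_ [A _ [B mB <-]] <-].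
  rewrite setTI permuted_sample_path_cylinder.
  by apply: measurable_sample_path_cylinder => i; exact: mB.
have mZ := measurable_sample_path.
apply: (@measure_unique _ R trajs (cylinders m) (fun=> setT) erefl
  (@cylinders_setI m) (fun=> cylinders_setT m) _
  (pushforward P (permuted_sample_path : Omega -> trajs))
  (pushforward P (sample_path : Omega -> trajs))).
- by rewrite bigcup_const //; exists 0%N.
- by move=> _ [A _ [B mB <-]]; exact: probability_permuted_cylinder.
- move=> _; change (P (permuted_sample_path @^-1` setT) < +oo)%E.
  by rewrite preimage_setT probability_setT ltry.
Qed.

End law_preserving_involution.

End sample_path_law.

Lemma measurable_rank_event n k :
  measurable (rank_stat lt X U n @^-1` [set k]).
Proof.
have := measurable_sample_path n measurableT _
  (measurable_traj_rank n n k (leqnn n)).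
by rewrite setTI.
Qed.

Lemma measurable_term_event j :
  measurable (sample_path @^-1` (rank_term j @^-1` [set 1%N])).
Proof.
have := measurable_sample_path j measurableT _
  (measurable_rank_term j j 1 (leqnn j)).
by rewrite setTI.
Qed.

Hypothesis lt_irr : forall x, ~~ lt x x.

Lemma rank_term_le1 j z : (rank_term j z <= 1)%N.
Proof.
rewrite /rank_term; case: eqP => [->|_]; last by rewrite addn0 leq_b1.
by rewrite (negbTE (lt_irr _)) leq_b1.
Qed.

Section counting.
Variable m : nat.
Hypothesis X_ident : forall i j t, (1 <= i)%N -> (1 <= j)%N ->
  P (X i @^-1` [set t]) = P (X j @^-1` [set t]).
Hypothesis U_ident : forall i j B, measurable B ->
  P (U i @^-1` B) = P (U j @^-1` B).

Let rank_event k := rank_stat lt X U m @^-1` [set k].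
Let term_event j := sample_path @^-1` (rank_term j @^-1` [set 1%N]).

Lemma transposition_law j (S : set (g_sigma_algebraType (cylinders m))) :
  (1 <= j <= m)%N -> measurable S ->
  P (permuted_sample_path (tperm_nat j m) @^-1` S) = P (sample_path @^-1` S).
Proof.
move=> /andP[j1 jm] mS; have m1 := leq_trans j1 jm.
have s_in a i : (a <= j)%N -> (a <= m)%N -> (a <= i < m.+1)%N ->
    (a <= tperm_nat j m i < m.+1)%N.
  by move=> aj am; apply: tperm_nat_in; rewrite ?aj ?am ?ltnSn // ltnS.
apply: (permuted_sample_path_law _ _ _ _ _ (fun i B _ => U_ident _ _ B)) => //.
- by move=> i im; have /andP[] := s_in 0%N i isT isT im.
- by move=> i _; exact: tperm_natK.
case=> [t _|i t im]; first by rewrite tperm_nat_id // eq_sym -lt0n.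
by apply: X_ident => //; have /andP[] := s_in 1%N i.+1 j1 m1 im.
Qed.

Lemma probability_term_event k j : (1 <= j <= m)%N ->
  P (rank_event k `&` term_event j) = P (rank_event k `&` term_event m).
Proof.
move=> /[dup] j_in /andP[j1 jm]; have m1 := leq_trans j1 jm.
pose S : set (g_sigma_algebraType (cylinders m)) :=
  traj_rank m @^-1` [set k] `&` rank_term j @^-1` [set 1%N].
have mS : measurable S.
  apply: measurableI; first exact: measurable_traj_rank (leqnn m).
  exact: measurable_rank_term jm.
rewrite [LHS](_ : _ = P (sample_path @^-1` S)) //.
rewrite -(transposition_law _ _ j_in mS).
have s0 : tperm_nat j m 0 = 0%N by rewrite tperm_nat_id // eq_sym -lt0n.
have s_in i : (1 <= i < m.+1)%N -> (1 <= tperm_nat j m i < m.+1)%N.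
  by apply: tperm_nat_in; rewrite ?j1 ?m1 ?ltnSn // ltnS.
congr (P _); apply/seteqP; split => w; rewrite /permuted_sample_path /S /=;
  by rewrite traj_rank_comp // => [|i _];
     rewrite ?rank_term_comp ?tperm_natL ?tperm_natK.
Qed.

Lemma indic_term_event j w :
  \1_(term_event j) w = (rank_term j (sample_path w))%:R :> R.
Proof.
rewrite indicE; congr (_%:R).
have -> : (w \in term_event j) = (rank_term j (sample_path w) == 1)%N.
  by apply/idP/eqP => [/set_mem|/mem_set].
by case: (rank_term j _) (rank_term_le1 j (sample_path w)) => [|[|]].
Qed.

Lemma sum_probability_term_event k :
  (\sum_(1 <= j < m.+1) P (rank_event k `&` term_event j) =
   k%:R%:E * P (rank_event k))%E.
Proof.
have mE := measurable_rank_event m k.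
have indic_integral j : P (rank_event k `&` term_event j) =
    (\int[P]_(w in rank_event k) (\1_(term_event j) w)%:E)%E.
  by rewrite setIC integral_indic //; exact: measurable_term_event.
under eq_bigr do rewrite indic_integral.
rewrite -ge0_integral_sum //; last first.
  by move=> j; apply/measurable_EFinP/measurable_indic/measurable_term_event.
rewrite -integral_cst //; apply: eq_integral => w; rewrite inE /= => Ekw.
rewrite sumEFin; congr EFin.
under eq_bigr do rewrite indic_term_event.
by rewrite -natr_sum -Ekw.
Qed.

Lemma probability_last_term_event k :
  (m%:R%:E * P (rank_event k `&` term_event m) =
   k%:R%:E * P (rank_event k))%E.
Proof.
rewrite -sum_probability_term_event.
rewrite (@eq_big_nat _ _ _ 1 m.+1 _ (fun=> P (rank_event k `&` term_event m))).
  by rewrite sumr_const_nat subn1 mule_natl.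
exact: probability_term_event.
Qed.

Lemma rank_pred_preimage k : (1 <= m)%N ->
  rank_stat lt X U m.-1 @^-1` [set k] =
  (rank_event k `\` term_event m) `|` (rank_event k.+1 `&` term_event m).
Proof.
move=> m1.
have rank_split w : rank_stat lt X U m w =
    (rank_stat lt X U m.-1 w + rank_term m (sample_path w))%N.
  by rewrite !rank_statE -{1}(prednK m1) traj_rankS prednK.
apply/seteqP; split => w /=; rewrite /rank_event /term_event /= rank_split;
  by move: (rank_term_le1 m (sample_path w)); lia.
Qed.

Lemma probability_rank_pred k : (1 <= m)%N ->
  (P (rank_stat lt X U m.-1 @^-1` [set k]) + P (rank_event k `&` term_event m) =
   P (rank_event k) + P (rank_event k.+1 `&` term_event m))%E.
Proof.
move=> m1; have mE l := measurable_rank_event m l.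
have mI := measurable_term_event m.
rewrite rank_pred_preimage // measureU; last 3 first.
- exact: measurableD (mE k) mI.
- exact: measurableI (mE k.+1) mI.
- by apply/seteqP; split => // w [[_ /= nIw] [_ /= Iw]].
by rewrite (measureDI P (mE k) mI) addeAC.
Qed.

Lemma uniform_rank_pred : (1 <= m)%N ->
  uniform_on_0m P (rank_stat lt X U m) m ->
  uniform_on_0m P (rank_stat lt X U m.-1) m.-1.
Proof.
move=> m1 unif k km; have km1 : (k.+1 <= m)%N by rewrite -(prednK m1).
have fin A : measurable A -> P A = (fine (P A))%:E.
  by move=> mA; rewrite fineK // fin_num_measure.
have mE l := measurable_rank_event m l; have mI := measurable_term_event m.
have := probability_rank_pred k m1.
have := probability_last_term_event k.
have := probability_last_term_event k.+1.
rewrite /rank_event !unif ?(ltnW km1) //.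
rewrite (fin _ (measurableI _ _ (mE k) mI)).
rewrite (fin _ (measurableI _ _ (mE k.+1) mI)).
rewrite (fin _ (measurable_rank_event m.-1 k)).
rewrite -!EFinM -!EFinD => -[b_eq] [a_eq] [p_eq].
rewrite prednK //; congr EFin.
set p := fine (P (rank_stat lt X U m.-1 @^-1` _)) in p_eq *.
set a := fine (P (_ @^-1` [set k] `&` _)) in a_eq p_eq.
set b := fine (P (_ @^-1` [set k.+1] `&` _)) in b_eq p_eq.
have m0 : (m%:R : R) != 0 by rewrite pnatr_eq0 -lt0n.
apply: (mulfI m0); rewrite mulfV // -[p](addrK a) p_eq mulrBr mulrDr b_eq a_eq.
by field; rewrite addrC natr1 pnatr_eq0.
Qed.

End counting.

End rank_statistic.

Theorem theorem3p4 (R : realType) (T : countType) (lt : rel T)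
  (p q : T -> R)
  (d : measure_display) (Omega : measurableType d) (P : probability Omega R)
  (X : nat -> Omega -> T) (U : nat -> Omega -> R) (M : nat) :
  strict_total_order lt ->
  p <> q ->
  (forall i t, measurable (X i @^-1` [set t])) ->
  (forall i, measurable_fun setT (U i)) ->
  mutually_independent P X U ->
  (forall t, P (X 0%N @^-1` [set t]) = (q t)%:E) ->
  (forall j t, (1 <= j)%N -> P (X j @^-1` [set t]) = (p t)%:E) ->
  (forall i (B : set R), measurable B ->
     P (U i @^-1` B) = lebesgue_measure (B `&` `[0, 1]%classic)) ->
  (1 <= M)%N ->
  ~ uniform_on_0m P (rank_stat lt X U M) M ->
  forall m : nat, (M <= m)%N -> ~ uniform_on_0m P (rank_stat lt X U m) m.
Proof.
(* [p <> q] only guarantees that some [M] exists; the argument never uses it. *)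
move=> [lt_irr _ _] _ mX mU indep _ Xp Uunif _ nonunif m Mm unif_m.
apply: nonunif; move: unif_m; rewrite -(subnK Mm).
have X_ident i j t : (1 <= i)%N -> (1 <= j)%N ->
    P (X i @^-1` [set t]) = P (X j @^-1` [set t]).
  by move=> i1 j1; rewrite !Xp.
have U_ident i j B : measurable B -> P (U i @^-1` B) = P (U j @^-1` B).
  by move=> mB; rewrite !Uunif.
elim: (m - M)%N => [//|n IH unif]; apply: IH.
exact: (uniform_rank_pred _ _ _ _ _ _ _ mX mU _ indep lt_irr (n + M).+1
  X_ident U_ident).
Qed.
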